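(* Let $\hat M,M^\star\in\mathbb R^{(n_1+n_2)\times(m_1+m_2)}$ be partitioned into blocks $\hat M_{ij},M^\star_{ij}\in\mathbb R^{n_i\times m_j}$, $i,j\in\{1,2\}$. Suppose $\operatorname{rank}\hat M\le p$, $\operatorname{rank}M^\star=p$, $\sigma_p(M^\star_{11})>0$, and for all $(i,j)\ne(2,2)$, $\|\hat M_{ij}-M^\star_{ij}\|_F\le\epsilon$ and $\|M^\star_{ij}\|_F\le M$, where $\epsilon\le\sigma_p(M^\star_{11})/2$. Then $$\|\hat M_{22}-M^\star_{22}\|_F\le 8\epsilon\frac{M^2}{\sigma_p(M^\star_{11})^2}.$$
   Context: $\|\cdot\|_F$ is the Frobenius norm and $\sigma_p(A)$ denotes the $p$-th largest singular value of a matrix $A$. *)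

From HB Require Import structures.
From mathcomp Require Import all_boot all_order all_algebra.
From mathcomp Require Import reals.
From Stdlib Require Import ClassicalEpsilon.
Set Implicit Arguments. Unset Strict Implicit. Unset Printing Implicit Defensive.
Import Order.TTheory GRing.Theory Num.Theory.
Local Open Scope ring_scope.

Definition frob_norm (R : realType) (m n : nat) (A : 'M[R]_(m, n)) : R :=
  Num.sqrt (\sum_(i < m) \sum_(j < n) A i j ^+ 2).

Definition rect_diag (R : realType) (m n : nat) (s : nat -> R) : 'M[R]_(m, n) :=
  \matrix_(i < m, j < n) (if (i : nat) == (j : nat) then s (i : nat) else 0).

Definition is_singular_value_seq (R : realType) (m n : nat) (A : 'M[R]_(m, n))
    (s : nat -> R) : Prop :=
  [/\ (forall k, 0 <= s k),
      (forall k l, (k <= l)%N -> s l <= s k),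
      (forall k, (minn m n <= k)%N -> s k = 0) &
      exists (U : 'M[R]_m) (V : 'M[R]_n),
        [/\ U^T *m U = 1%:M, V^T *m V = 1%:M & A = U *m rect_diag m n s *m V^T]].

(* sigma_p(A): the p-th largest singular value (p counted from 1),
   i.e. s (p-1) for the singular value sequence s of A (which exists and is
   unique by the SVD theorem). *)
Definition sing_val (R : realType) (m n : nat) (p : nat) (A : 'M[R]_(m, n)) : R :=
  epsilon (inhabits 0)
    (fun x => exists s, is_singular_value_seq A s /\ x = s p.-1).

From HB Require Import structures.
From mathcomp Require Import all_boot all_order all_algebra.
From mathcomp Require Import reals.
From mathcomp Require Import complex spectral.
From mathcomp Require Import ring lra.
From Stdlib Require Import ClassicalEpsilon.
Import Order.TTheory GRing.Theory Num.Theory.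
Set Implicit Arguments. Unset Strict Implicit. Unset Printing Implicit Defensive.
Local Open Scope ring_scope.

(* Let P, Q be the first p columns of the orthogonal factors of an SVD of
   M*_11 (they exist since sigma_p(M*_11) > 0).  The p x p compression
   D = P^T M*_11 Q = diag(sigma_1, ..., sigma_p) satisfies
   ||Y D||_F >= sigma_p ||Y||_F, and so does K = P^T Mhat_11 Q with constant
   sigma_p / 2, because ||K - D||_F <= eps <= sigma_p / 2.  Both matrices have
   rank at most p while their compressed top-left blocks are invertible p x p
   matrices, so their bottom-right blocks are Schur complements:
     M_22 = (M_21 Q) (P^T M_11 Q)^-1 (P^T M_12).
   Expanding the difference of the two Schur complements to first order and
   bounding each term with the triangle inequality and submultiplicativity of
   the Frobenius norm gives the bound 8 eps M^2 / sigma_p^2. *)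

Section FrobeniusNorm.
Variable R : realType.
Implicit Types m n k : nat.

Lemma cauchy_schwarz (I : finType) (a b : I -> R) :
  (\sum_i a i * b i) ^+ 2 <= (\sum_i a i ^+ 2) * (\sum_i b i ^+ 2).
Proof.
set A := \sum_i a i ^+ 2; set B := \sum_i b i ^+ 2; set C := \sum_i a i * b i.
have A0 : 0 <= A by apply: sumr_ge0 => i _; exact: sqr_ge0.
have sum_sq : \sum_i (A * b i - C * a i) ^+ 2 = A * (A * B - C ^+ 2).
  rewrite (eq_bigr (fun i => A ^+ 2 * b i ^+ 2 - (2 * A * C) * (a i * b i)
                             + C ^+ 2 * a i ^+ 2)); last by move=> i _; ring.
  rewrite big_split /= sumrB -!mulr_sumr -/A -/B -/C; ring.
have : 0 <= A * (A * B - C ^+ 2).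
  by rewrite -sum_sq; apply: sumr_ge0 => i _; exact: sqr_ge0.
have [A_eq0 _|A_neq0] := eqVneq A 0.
  have a0 i : a i = 0.
    apply/eqP; rewrite -sqrf_eq0; apply/eqP.
    by move/psumr_eq0P: A_eq0 => -> // j _; exact: sqr_ge0.
  rewrite /C big1 ?expr0n ?mulr_ge0 // ?sumr_ge0 // => i _.
    exact: sqr_ge0.
  by rewrite a0 mul0r.
by rewrite pmulr_rge0 ?subr_ge0 // lt_def A_neq0 A0.
Qed.

Definition frob_sq m n (A : 'M[R]_(m, n)) : R := \sum_i \sum_j A i j ^+ 2.

Lemma frob_sq_ge0 m n (A : 'M[R]_(m, n)) : 0 <= frob_sq A.
Proof. by apply: sumr_ge0 => i _; apply: sumr_ge0 => j _; exact: sqr_ge0. Qed.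

Lemma frob_ge0 m n (A : 'M[R]_(m, n)) : 0 <= frob_norm A.
Proof. exact: sqrtr_ge0. Qed.

Lemma sqr_frob m n (A : 'M[R]_(m, n)) : frob_norm A ^+ 2 = frob_sq A.
Proof. by rewrite sqr_sqrtr // frob_sq_ge0. Qed.

Lemma frob_sq_pair m n (A : 'M[R]_(m, n)) :
  frob_sq A = \sum_(k : 'I_m * 'I_n) A k.1 k.2 ^+ 2.
Proof. by rewrite /frob_sq pair_big. Qed.

Lemma frob_sq_tr m n (A : 'M[R]_(m, n)) : frob_sq A^T = frob_sq A.
Proof.
rewrite /frob_sq exchange_big.
by apply: eq_bigr => i _; apply: eq_bigr => j _; rewrite mxE.
Qed.

Lemma frob_tr m n (A : 'M[R]_(m, n)) : frob_norm A^T = frob_norm A.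
Proof. by rewrite /frob_norm -/(frob_sq _) frob_sq_tr. Qed.

Lemma frob_sq_eq0 m n (A : 'M[R]_(m, n)) : frob_sq A = 0 -> A = 0.
Proof.
rewrite frob_sq_pair => /psumr_eq0P A0; apply/matrixP => i j; rewrite mxE.
apply/eqP; rewrite -sqrf_eq0; apply/eqP.
by apply: (A0 _ (i, j)) => // k _; exact: sqr_ge0.
Qed.

Lemma frob0 m n : frob_norm (0 : 'M[R]_(m, n)) = 0.
Proof.
by rewrite /frob_norm big1 ?sqrtr0 // => i _; rewrite big1 // => j _; rewrite mxE expr0n.
Qed.

Lemma frob_eq0 m n (A : 'M[R]_(m, n)) : frob_norm A = 0 -> A = 0.
Proof.
move=> /eqP; rewrite sqrtr_eq0 -/(frob_sq A) => A_le0.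
by apply: frob_sq_eq0; apply/eqP; rewrite eq_le A_le0 frob_sq_ge0.
Qed.

Lemma frobN m n (A : 'M[R]_(m, n)) : frob_norm (- A) = frob_norm A.
Proof.
by congr Num.sqrt; apply: eq_bigr => i _; apply: eq_bigr => j _; rewrite mxE sqrrN.
Qed.

Lemma ler_sqrt_sqr (x y : R) : x ^+ 2 <= y -> x <= Num.sqrt y.
Proof.
move=> le_x2y; apply: le_trans (ler_norm x) _.
by rewrite -sqrtr_sqr; exact: ler_wsqrtr.
Qed.

Lemma frobD m n (A B : 'M[R]_(m, n)) :
  frob_norm (A + B) <= frob_norm A + frob_norm B.
Proof.
rewrite -[X in _ <= X]ger0_norm ?addr_ge0 ?frob_ge0 // -sqrtr_sqr.
apply: ler_wsqrtr; rewrite -/(frob_sq _).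
set d := \sum_(k : 'I_m * 'I_n) A k.1 k.2 * B k.1 k.2.
have expand : frob_sq (A + B) = frob_sq A + 2 * d + frob_sq B.
  rewrite !frob_sq_pair /d mulr_sumr -!big_split /=.
  by apply: eq_bigr => k _; rewrite mxE; ring.
have le_d : d <= frob_norm A * frob_norm B.
  rewrite -sqrtrM ?frob_sq_ge0 //; apply: ler_sqrt_sqr.
  rewrite -/(frob_sq A) -/(frob_sq B) !frob_sq_pair; exact: cauchy_schwarz.
rewrite expand sqrrD !sqr_frob; lra.
Qed.

Lemma frobB m n (A B : 'M[R]_(m, n)) :
  frob_norm (A - B) <= frob_norm A + frob_norm B.
Proof. by rewrite -(frobN B); exact: frobD. Qed.

Lemma frobM m n k (A : 'M[R]_(m, n)) (B : 'M[R]_(n, k)) :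
  frob_norm (A *m B) <= frob_norm A * frob_norm B.
Proof.
rewrite -sqrtrM ?frob_sq_ge0 //; apply: ler_wsqrtr.
rewrite mulr_suml; apply: ler_sum => i _.
rewrite [X in _ <= _ * X]exchange_big /= mulr_sumr; apply: ler_sum => l _.
rewrite mxE; exact: cauchy_schwarz.
Qed.

Lemma frob_sq_trace m n (A : 'M[R]_(m, n)) : frob_sq A = \tr (A *m A^T).
Proof.
apply: eq_bigr => i _; rewrite mxE.
by apply: eq_bigr => j _; rewrite mxE expr2.
Qed.

Lemma frob_sq_mul_orth m n k (A : 'M[R]_(m, n)) (V : 'M[R]_(n, k)) :
  V *m V^T = 1%:M -> frob_sq (A *m V) = frob_sq A.
Proof.
by move=> VV; rewrite !frob_sq_trace trmx_mul mulmxA -(mulmxA A) VV mulmx1.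
Qed.

Lemma frob1_ge1 p : (0 < p)%N -> 1 <= frob_norm (1%:M : 'M[R]_p).
Proof.
move=> p_gt0; apply: ler_sqrt_sqr; rewrite expr1n.
rewrite (eq_bigr (fun _ => 1)); first by rewrite sumr_const card_ord ler1n.
move=> i _; rewrite (bigD1 i) //= big1 ?addr0 => [|j ji].
  by rewrite mxE eqxx expr1n.
by rewrite mxE eq_sym (negbTE ji) expr0n.
Qed.

End FrobeniusNorm.

Section LeadingColumns.
Variable R : realType.

Definition lead_cols n p : 'M[R]_(n, p) :=
  \matrix_(i, j) ((i : nat) == (j : nat))%:R.

Lemma mul_lead_cols m n p (A : 'M[R]_(m, n)) (le_pn : (p <= n)%N) i j :
  (A *m lead_cols n p) i j = A i (widen_ord le_pn j).
Proof.
rewrite mxE (bigD1 (widen_ord le_pn j)) //= mxE eqxx mulr1 big1 ?addr0 // => k kj.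
rewrite mxE; case: eqP => [ekj|]; last by rewrite mulr0.
by case/eqP: kj; apply: val_inj.
Qed.

Lemma lead_cols_compress n m p (A : 'M[R]_(n, m))
    (le_pn : (p <= n)%N) (le_pm : (p <= m)%N) i j :
  ((lead_cols n p)^T *m A *m lead_cols m p) i j =
  A (widen_ord le_pn i) (widen_ord le_pm j).
Proof.
rewrite (mul_lead_cols _ le_pm) -[_ *m A]trmxK trmx_mul trmxK mxE.
by rewrite (mul_lead_cols _ le_pn) mxE.
Qed.

Lemma frob_sq_lead_cols m n p (A : 'M[R]_(m, n)) :
  (p <= n)%N -> frob_sq (A *m lead_cols n p) <= frob_sq A.
Proof.
move=> le_pn; apply: ler_sum => i _.
under eq_bigr do rewrite (mul_lead_cols _ le_pn).
rewrite -(big_ord_narrow (F := fun k => A i k ^+ 2) le_pn).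
rewrite [X in _ <= X](bigID (fun k : 'I_n => (k < p)%N)) /= ler_wpDr //.
by apply: sumr_ge0 => k _; exact: sqr_ge0.
Qed.

Lemma frob_mul_lead_cols m n p (X : 'M[R]_(m, n)) (V : 'M[R]_n) :
  V^T *m V = 1%:M -> (p <= n)%N ->
  frob_norm (X *m (V *m lead_cols n p)) <= frob_norm X.
Proof.
move=> VV le_pn; apply: ler_wsqrtr; rewrite -/(frob_sq _) -/(frob_sq X) mulmxA.
apply: le_trans (frob_sq_lead_cols _ le_pn) _.
by rewrite frob_sq_mul_orth // mulmx1C.
Qed.

Lemma frob_lead_cols_mul m n p (X : 'M[R]_(n, m)) (U : 'M[R]_n) :
  U^T *m U = 1%:M -> (p <= n)%N ->
  frob_norm ((U *m lead_cols n p)^T *m X) <= frob_norm X.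
Proof.
move=> UU le_pn; rewrite -frob_tr trmx_mul trmxK -(frob_tr X).
exact: frob_mul_lead_cols.
Qed.

End LeadingColumns.

Section LowerBounded.
Variable R : realType.

Definition lower_bounded p (c : R) (K : 'M[R]_p) : Prop :=
  forall k (Y : 'M[R]_(k, p)), c * frob_norm Y <= frob_norm (Y *m K).

Lemma lower_bounded_unit p (c : R) (K : 'M[R]_p) :
  0 < c -> lower_bounded c K -> K \in unitmx.
Proof.
move=> c_gt0 lbK; rewrite -row_free_unit -kermx_eq0; apply/eqP/frob_eq0.
have := lbK _ (kermx K); rewrite mulmx_ker frob0 pmulr_rle0 // => ker_le0.
by apply/eqP; rewrite eq_le ker_le0 frob_ge0.
Qed.

Lemma lower_bounded_inv p (c : R) (K : 'M[R]_p) k (X : 'M[R]_(k, p)) :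
  0 < c -> lower_bounded c K -> frob_norm (X *m invmx K) <= c^-1 * frob_norm X.
Proof.
move=> c_gt0 lbK; have := lbK _ (X *m invmx K).
by rewrite -mulmxA mulVmx ?mulmx1 ?ler_pdivlMl // (lower_bounded_unit c_gt0 lbK).
Qed.

Lemma lower_bounded_perturb p (c eps : R) (D K : 'M[R]_p) :
  lower_bounded c D -> frob_norm (K - D) <= eps -> eps <= c / 2 ->
  lower_bounded (c / 2) K.
Proof.
move=> lbD KD_le eps_le k Y.
have YD : Y *m D = Y *m K - Y *m (K - D) by rewrite mulmxBr opprB addrC subrK.
have := lbD _ Y; rewrite YD => lbY.
have := frobB (Y *m K) (Y *m (K - D)); have := frobM Y (K - D).
have : frob_norm Y * frob_norm (K - D) <= frob_norm Y * (c / 2).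
  by rewrite ler_wpM2l ?frob_ge0 // (le_trans KD_le).
have := frob_ge0 Y; lra.
Qed.

Lemma lower_bounded_diag p (c : R) (d : 'rV[R]_p) :
  0 <= c -> (forall j, c <= d 0 j) -> lower_bounded c (diag_mx d).
Proof.
move=> c_ge0 c_le k Y; rewrite -[c]ger0_norm // -sqrtr_sqr -sqrtrM ?sqr_ge0 //.
apply: ler_wsqrtr; rewrite mulr_sumr; apply: ler_sum => i _.
rewrite mulr_sumr; apply: ler_sum => j _; rewrite mul_mx_diag mxE exprMn mulrC.
by rewrite ler_wpM2l ?sqr_ge0 // ler_sqr ?nnegrE // (le_trans c_ge0).
Qed.

Lemma lower_bounded_le_frob p (c : R) (K : 'M[R]_p) :
  (0 < p)%N -> lower_bounded c K -> c <= frob_norm K.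
Proof.
move=> p_gt0 lbK; have [c_le0|c_gt0] := leP c 0.
  exact: le_trans c_le0 (frob_ge0 K).
have lb1 := lbK _ (1%:M : 'M_p); rewrite mul1mx in lb1.
apply: le_trans lb1; rewrite -{1}[c]mulr1 ler_pM2l //.
exact: frob1_ge1.
Qed.

End LowerBounded.

Lemma low_rank_schur (F : fieldType) (a b c d p : nat) (X : 'M[F]_(a + b, c + d))
    (L : 'M[F]_(p, a)) (Q : 'M[F]_(c, p)) :
  (\rank X <= p)%N -> L *m ulsubmx X *m Q \in unitmx ->
  drsubmx X = dlsubmx X *m Q *m invmx (L *m ulsubmx X *m Q) *m (L *m ursubmx X).
Proof.
move=> rkX unitK; set K := L *m ulsubmx X *m Q.
set Top := row_mx K (L *m ursubmx X).
set Bot := row_mx (dlsubmx X *m Q) (drsubmx X).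
(* col_mx Top Bot is X compressed by L on the first block row and by Q on the
   first block column; it still has rank at most p. *)
have rkY : (\rank (col_mx Top Bot) <= p)%N.
  have -> : col_mx Top Bot = block_mx L 0 0 1%:M *m X *m block_mx Q 0 0 1%:M.
    rewrite -[in RHS](submxK X) !mulmx_block !mul0mx !mulmx0 !mul1mx !mulmx1.
    by rewrite !addr0 !add0r.
  by rewrite (leq_trans (mxrankM_maxl _ _)) // (leq_trans (mxrankM_maxr _ _)).
(* The top rows already have rank p, so they span all the rows. *)
have rkTop : (p <= \rank Top)%N.
  have := mxrankM_maxl Top (col_mx (1%:M : 'M[F]_p) (0 : 'M_(d, p))).
  by rewrite mul_row_col mulmx1 mulmx0 addr0 mxrank_unit.
have sTopY : (Top <= col_mx Top Bot)%MS by rewrite -addsmxE addsmxSl.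
have sYTop : (col_mx Top Bot <= Top)%MS.
  by rewrite -(mxrank_leqif_sup sTopY).2 eqn_leq mxrankS //= (leq_trans rkY).
have /submxP[W eW] : (Bot <= Top)%MS.
  by apply: submx_trans sYTop; rewrite -addsmxE addsmxSr.
move: eW; rewrite /Bot /Top mul_mx_row => /eq_row_mx[-> ->].
by rewrite -(mulmxA W K) mulmxV // mulmx1 mulmxA.
Qed.

Lemma schur_complement_diff (F : fieldType) p a b (D K : 'M[F]_p)
    (C Ch : 'M[F]_(a, p)) (B Bh : 'M[F]_(p, b)) :
  D \in unitmx -> K \in unitmx ->
  Ch *m invmx K *m Bh - C *m invmx D *m B =
    (Ch - C) *m invmx K *m Bh + C *m invmx K *m (Bh - B)
    + C *m invmx K *m (D - K) *m invmx D *m B.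
Proof.
move=> unitD unitK.
have -> : C *m invmx K *m (D - K) *m invmx D = C *m invmx K - C *m invmx D.
  rewrite mulmxBr mulmxBl -!mulmxA mulmxV // mulmx1.
  by rewrite (mulmxA (invmx K)) mulVmx // mul1mx.
rewrite !mulmxBl !mulmxBr -!mulmxA.
by rewrite [_ - _ + _]addrA subrK addrA subrK.
Qed.

Lemma perturbation_arith (R : realType) (eps sig M : R) :
  0 < sig -> sig <= M -> 0 <= eps -> eps <= sig / 2 ->
  2 * eps * (eps + M) * sig + 2 * M * eps * sig + 2 * M ^+ 2 * eps
    <= 8 * eps * M ^+ 2.
Proof.
move=> sig_gt0 sig_le eps_ge0 eps_le.
have M_gt0 : 0 < M := lt_le_trans sig_gt0 sig_le.
have h1 : 0 <= eps * sig * (sig / 2 - eps) by rewrite !mulr_ge0 //; lra.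
have h2 : 0 <= eps * (M - sig) * M by rewrite !mulr_ge0 //; lra.
have h3 : 0 <= eps * (M - sig) * (M + sig) by rewrite !mulr_ge0 //; lra.
have h4 : 0 <= eps * M * M by rewrite !mulr_ge0 //; lra.
nra.
Qed.

Lemma schur_complement_perturbation (R : realType) p a b (D K : 'M[R]_p)
    (C Ch : 'M[R]_(a, p)) (B Bh : 'M[R]_(p, b)) (sig eps M : R) :
  0 < sig -> sig <= M -> lower_bounded sig D ->
  frob_norm (K - D) <= eps -> eps <= sig / 2 ->
  frob_norm (Ch - C) <= eps -> frob_norm C <= M ->
  frob_norm (Bh - B) <= eps -> frob_norm B <= M ->
  frob_norm (Ch *m invmx K *m Bh - C *m invmx D *m B)
    <= 8 * eps * (M ^+ 2 / sig ^+ 2).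
Proof.
move=> sig_gt0 sig_le lbD KD_le eps_le dC_le C_le dB_le B_le.
have eps_ge0 : 0 <= eps := le_trans (frob_ge0 _) KD_le.
have half_gt0 : 0 < sig / 2 by rewrite divr_gt0.
have lbK := lower_bounded_perturb lbD KD_le eps_le.
set r := (sig / 2)^-1.
have r_ge0 : 0 <= r by rewrite invr_ge0 ltW.
have invK k (X : 'M[R]_(k, p)) c :
    frob_norm X <= c -> frob_norm (X *m invmx K) <= r * c.
  move=> X_le; apply: le_trans (lower_bounded_inv _ half_gt0 lbK) _.
  exact: ler_wpM2l.
have Bh_le : frob_norm Bh <= eps + M.
  rewrite -(subrK B Bh); apply: le_trans (frobD _ _) _; exact: lerD.
have t1 : frob_norm ((Ch - C) *m invmx K *m Bh) <= r * eps * (eps + M).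
  apply: le_trans (frobM _ _) _.
  by apply: ler_pM; rewrite ?frob_ge0 ?invK.
have t2 : frob_norm (C *m invmx K *m (Bh - B)) <= r * M * eps.
  apply: le_trans (frobM _ _) _.
  by apply: ler_pM; rewrite ?frob_ge0 ?invK.
have t3 : frob_norm (C *m invmx K *m (D - K) *m invmx D *m B)
    <= sig^-1 * (r * M * eps) * M.
  apply: le_trans (frobM _ _) _; apply: ler_pM; rewrite ?frob_ge0 //.
  apply: le_trans (lower_bounded_inv _ sig_gt0 lbD) _.
  apply: ler_wpM2l; first by rewrite invr_ge0 ltW.
  apply: le_trans (frobM _ _) _.
  by apply: ler_pM; rewrite ?frob_ge0 ?invK // -opprB frobN.
rewrite schur_complement_diff ?(lower_bounded_unit _ lbK)
  ?(lower_bounded_unit _ lbD) //.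
apply: le_trans (frobD _ _) _; apply: le_trans (lerD (frobD _ _) (lexx _)) _.
apply: le_trans (lerD (lerD t1 t2) t3) _.
have -> : r * eps * (eps + M) + r * M * eps + sig^-1 * (r * M * eps) * M =
    (2 * eps * (eps + M) * sig + 2 * M * eps * sig + 2 * M ^+ 2 * eps) / sig ^+ 2.
  by rewrite /r; field; rewrite gt_eqF.
rewrite mulrA ler_wpM2r ?invr_ge0 ?sqr_ge0 //; exact: perturbation_arith.
Qed.

Section SymmetricEigen.
Variable R : realType.
Local Notation C := R[i].
Local Notation toC := (real_complex R).

Lemma Re_mul_real (z : C) (x : R) : complex.Re (z * toC x) = complex.Re z * x.
Proof. by case: z => a b /=; rewrite mulr0 subr0. Qed.

Lemma Im_mul_real (z : C) (x : R) : complex.Im (z * toC x) = complex.Im z * x.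
Proof. by case: z => a b /=; rewrite mulr0 add0r mulrC. Qed.

Lemma Re_mulmx_real k l (r : 'rV[C]_k) (S : 'M[R]_(k, l)) :
  map_mx (@complex.Re R) (r *m map_mx toC S) = map_mx (@complex.Re R) r *m S.
Proof.
apply/matrixP => i j; rewrite !mxE raddf_sum.
by apply: eq_bigr => k0 _; rewrite !mxE; exact: Re_mul_real.
Qed.

Lemma Im_mulmx_real k l (r : 'rV[C]_k) (S : 'M[R]_(k, l)) :
  map_mx (@complex.Im R) (r *m map_mx toC S) = map_mx (@complex.Im R) r *m S.
Proof.
apply/matrixP => i j; rewrite !mxE raddf_sum.
by apply: eq_bigr => k0 _; rewrite !mxE; exact: Im_mul_real.
Qed.

Lemma real_complex_Re (z : C) : z \is Num.real -> z = toC (complex.Re z).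
Proof. by case: z => a b; rewrite complex_real => /eqP ->. Qed.

Lemma realsym_diagonalize n (S : 'M[R]_n) : S^T = S ->
  exists (P : 'M[C]_n) (lam : 'I_n -> R),
    P \in unitmx /\ P *m map_mx toC S = diag_mx (\row_j toC (lam j)) *m P.
Proof.
move=> Ssym; set SC := map_mx toC S.
have SC_herm : SC \is hermsymmx.
  apply: realsym_hermsym; last by apply/mxOverP => i j; rewrite mxE complex_real.
  by apply/is_hermitianmxP; rewrite expr0 scale1r map_mx_id // /SC map_trmx Ssym.
have /orthomx_spectralP eSC := hermitian_normalmx SC_herm.
have /mxOverP d_real := hermitian_spectral_diag_real SC_herm.
set P := spectralmx SC in eSC *; set d := spectral_diag SC in eSC d_real.
have P_unit : P \in unitmx by exact: spectral_unit.
exists P, (fun j => complex.Re (d 0 j)); split => //.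
have -> : \row_j toC (complex.Re (d 0 j)) = d.
  by apply/rowP => j; rewrite mxE -real_complex_Re.
by rewrite {1}eSC !mulmxA mulmxV // mul1mx.
Qed.

Section Diagonalized.
Variables (n : nat) (S : 'M[R]_n) (P : 'M[C]_n) (lam : 'I_n -> R).
Hypotheses (P_unit : P \in unitmx)
           (PS : P *m map_mx toC S = diag_mx (\row_j toC (lam j)) *m P).

Lemma diagonalized_conj :
  map_mx toC S = invmx P *m diag_mx (\row_j toC (lam j)) *m P.
Proof. by rewrite -[LHS](mulKmx P_unit) PS mulmxA. Qed.

Lemma eigenvalue_in_diag mu (w : 'rV[R]_n) :
  w != 0 -> w *m S = mu *: w -> exists j, mu = lam j.
Proof.
move=> w_neq0 ew; set q := map_mx toC w *m invmx P.
have eq : q *m diag_mx (\row_j toC (lam j)) = toC mu *: q.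
  have -> : q *m diag_mx (\row_j toC (lam j)) = map_mx toC (w *m S) *m invmx P.
    by rewrite map_mxM diagonalized_conj !mulmxA mulmxK.
  by rewrite ew map_mxZ -scalemxAl.
have [j qj_neq0] : exists j, q 0 j != 0.
  apply/existsP; apply: contraR w_neq0 => /existsPn q0.
  have q_eq0 : q = 0.
    by apply/rowP => k; rewrite [RHS]mxE; apply/eqP; exact: negbNE (q0 k).
  have : map_mx toC w = 0 by rewrite -[map_mx toC w](mulmxKV P_unit) -/q q_eq0 mul0mx.
  move/matrixP => w0; apply/eqP/matrixP => i k.
  by have := w0 i k; rewrite !mxE => /complexI.
exists j; apply: complexI; apply: (mulfI qj_neq0).
have := congr1 (fun X : 'rV[C]_n => X 0 j) eq; rewrite /= mul_mx_diag !mxE.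
by move->; rewrite mulrC.
Qed.

(* Each lam j has a real eigenvector: the real or the imaginary part of the
   j-th row of P. *)
Lemma diag_real_eigenvector j :
  exists2 v : 'rV[R]_n, v != 0 & v *m S = lam j *: v.
Proof.
set r := row j P.
have er : r *m map_mx toC S = toC (lam j) *: r.
  by rewrite /r -row_mul PS row_mul row_diag_mx mxE -scalemxAl -rowE.
have r_neq0 : r != 0.
  apply/eqP => r0; have : (delta_mx 0 j : 'rV[C]_n) = 0.
    by rewrite -[LHS](mulmxK P_unit) -rowE -/r r0 mul0mx.
  by move/matrixP => /(_ 0 j) /eqP; rewrite !mxE !eqxx oner_eq0.
have eRe : map_mx (@complex.Re R) r *m S = lam j *: map_mx (@complex.Re R) r.
  by rewrite -Re_mulmx_real er; apply/matrixP => i k; rewrite !mxE mulrC Re_mul_real mulrC.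
have eIm : map_mx (@complex.Im R) r *m S = lam j *: map_mx (@complex.Im R) r.
  by rewrite -Im_mulmx_real er; apply/matrixP => i k; rewrite !mxE mulrC Im_mul_real mulrC.
have [Re0|Re_neq0] := eqVneq (map_mx (@complex.Re R) r) 0; last by exists (map_mx (@complex.Re R) r).
exists (map_mx (@complex.Im R) r) => //.
apply: contraNneq r_neq0 => Im0; apply/eqP/matrixP => i k.
move/matrixP: Re0 => /(_ i k); move/matrixP: Im0 => /(_ i k); rewrite !mxE.
by case: (P _ _) => a b /= -> ->.
Qed.

Lemma trace_diagonalized : \tr S = \sum_j lam j.
Proof.
apply: complexI; rewrite -trace_map_mx rmorph_sum.
rewrite diagonalized_conj mxtrace_mulC mulmxA mulmxV //.
by rewrite mul1mx mxtrace_diag; apply: eq_bigr => k _; rewrite mxE.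
Qed.

End Diagonalized.

Lemma sym_top_eigen n (S : 'M[R]_n.+1) : S^T = S ->
  exists (l : R) (v : 'rV[R]_n.+1),
    [/\ v != 0, v *m S = l *: v,
        forall mu (w : 'rV[R]_n.+1), w != 0 -> w *m S = mu *: w -> mu <= l &
        \tr S <= n.+1%:R * l].
Proof.
move=> Ssym; have [P [lam [P_unit PS]]] := realsym_diagonalize Ssym.
have [j0 _ lam_max] := @arg_maxP _ R _ (ord0 : 'I_n.+1) predT lam isT.
have [v v_neq0 ev] := diag_real_eigenvector P_unit PS j0.
exists (lam j0), v; split => //.
  move=> mu w w_neq0 ew; have [j ->] := eigenvalue_in_diag P_unit PS w_neq0 ew.
  exact: lam_max.
rewrite (trace_diagonalized P_unit PS).
apply: le_trans (_ : \sum_(j < n.+1) lam j0 <= _).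
  by apply: ler_sum => j _; exact: lam_max.
by rewrite sumr_const card_ord mulr_natl.
Qed.

End SymmetricEigen.

Section Householder.
Variable R : realType.

Definition basis_row0 n : 'rV[R]_(1 + n) := row_mx 1%:M 0.

Lemma basis_row0_unit n : basis_row0 n *m (basis_row0 n)^T = 1%:M.
Proof. by rewrite tr_row_mx mul_row_col trmx1 trmx0 mulmx1 mulmx0 addr0. Qed.

Lemma basis_row0_mul m k (A : 'M[R]_(1 + m, k)) : basis_row0 m *m A = usubmx A.
Proof. by rewrite -{1}[A]vsubmxK mul_row_col mul1mx mul0mx addr0. Qed.

Lemma mul_tr_basis_row0 m k (A : 'M[R]_(k, 1 + m)) :
  A *m (basis_row0 m)^T = lsubmx A.
Proof.
by rewrite -{1}[A]hsubmxK tr_row_mx trmx1 trmx0 mul_row_col mulmx1 mulmx0 addr0.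
Qed.

Lemma row_sqnorm_eq0 n (y : 'rV[R]_n) : (y *m y^T) 0 0 = 0 -> y = 0.
Proof. by move=> y0; apply: frob_sq_eq0; rewrite frob_sq_trace /mxtrace big_ord1. Qed.

Lemma householder n (x : 'rV[R]_(1 + n)) : x *m x^T = 1%:M ->
  exists H : 'M[R]_(1 + n), [/\ H^T = H, H *m H = 1%:M & basis_row0 n *m H = x].
Proof.
move=> xx; set e := basis_row0 n; set y := e - x.
set c := (y *m y^T) 0 0; set k := 2 / c.
pose H : 'M[R]_(1 + n) := 1%:M - k *: (y^T *m y).
have yy : y *m y^T = c%:M by apply: mx11_scalar.
have kc : k ^+ 2 * c = 2 * k.
  by rewrite /k; have [->|c_neq0] := eqVneq c 0; [rewrite invr0 !mulr0 | field].
exists H; split.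
- by rewrite /H linearB /= trmx1 linearZ /= trmx_mul trmxK.
- have YY : (y^T *m y) *m (y^T *m y) = c *: (y^T *m y).
    by rewrite mulmxA -(mulmxA _ y) yy mul_mx_scalar -scalemxAl.
  rewrite /H; move: YY; set Y := y^T *m y => YY.
  rewrite mulmxBl mul1mx (mulmxBr (k *: Y)) mulmx1 -scalemxAl -scalemxAr YY.
  rewrite !scalerA -expr2 kc mulr_natl -scalerMnl; set Z := k *: Y.
  have -> : Z - Z *+ 2 = - Z by rewrite mulr2n opprD addrA subrr sub0r.
  by rewrite opprK subrK.
- set a := (e *m x^T) 0 0.
  have ex : e *m x^T = a%:M by apply: mx11_scalar.
  have xe : x *m e^T = a%:M by rewrite -[x *m _]trmxK trmx_mul trmxK ex tr_scalar_mx.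
  have ey : e *m y^T = (1 - a)%:M by rewrite linearB /= mulmxBr basis_row0_unit ex raddfB.
  have cE : c = 2 * (1 - a).
    rewrite /c linearB /= mulmxBr !mulmxBl basis_row0_unit xx xe ex.
    by rewrite !mxE !mulr1n; ring.
  rewrite /H mulmxBr mulmx1 -scalemxAr mulmxA ey mul_scalar_mx scalerA.
  have [c0|c_neq0] := eqVneq c 0.
    have ex0 : e = x by move/row_sqnorm_eq0: (c0) => /eqP; rewrite subr_eq0 => /eqP.
    by rewrite /k c0 invr0 mulr0 mul0r scale0r subr0.
  have -> : k * (1 - a) = 1.
    by rewrite /k cE; field; move: c_neq0; rewrite cE; apply: contraNneq => ->; rewrite mulr0.
  by rewrite scale1r /y opprB addrC subrK.
Qed.

End Householder.

(* The
   largest eigenvalue sig^2 of A^T A yields unit vectors u, v with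
   u A = sig v and A v^T = sig u^T; Householder reflections sending u, v to
   the first basis vectors deflate A to block_mx sig 0 0 A', and an SVD of A'
   extends to one of A because sig dominates the singular values of A'. *)
Section SVD.
Variable R : realType.

Lemma rect_diag_block m n (s : nat -> R) :
  rect_diag (1 + m) (1 + n) s =
  block_mx (s 0%N)%:M 0 0 (rect_diag m n (fun k => s k.+1)).
Proof.
apply/matrixP => i j.
rewrite -(splitK i) -(splitK j); case: (split i) => i0; case: (split j) => j0 /=.
- by rewrite block_mxEul !mxE !ord1.
- by rewrite block_mxEur !mxE ord1.
- by rewrite block_mxEdl !mxE ord1.
- by rewrite block_mxEdr !mxE /= eqSS.
Qed.

Lemma svd_zero m n : is_singular_value_seq (0 : 'M[R]_(m, n)) (fun=> 0).
Proof.
split => //; exists 1%:M, 1%:M; split; rewrite ?trmx1 ?mulmx1 //.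
by rewrite mul1mx; apply/matrixP => i j; rewrite !mxE; case: eqP.
Qed.

Lemma sing_val_top_eigen m n (A : 'M[R]_(m, n)) s :
  is_singular_value_seq A s -> 0 < s 0%N ->
  exists2 w : 'rV[R]_n, w != 0 & w *m (A^T *m A) = s 0%N ^+ 2 *: w.
Proof.
case=> _ _ s_gt_min [U [V [UU VV eA]]] s0_gt0.
case: m A U UU eA s_gt_min => [|m] A U UU eA s_gt_min.
  by move: s0_gt0; rewrite s_gt_min ?ltxx // min0n.
case: n A V VV eA s_gt_min => [|n] A V VV eA s_gt_min.
  by move: s0_gt0; rewrite s_gt_min ?ltxx // minn0.
set D := rect_diag m.+1 n.+1 s.
have e0D : delta_mx 0 0 *m D = s 0%N *: (delta_mx 0 0 : 'rV[R]_n.+1).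
  apply/matrixP => i j; rewrite -rowE !mxE ord1 /=.
  by case: j => [[|j] hj]; rewrite ?mulr1 ?mulr0.
have e0DT : delta_mx 0 0 *m D^T = s 0%N *: (delta_mx 0 0 : 'rV[R]_m.+1).
  apply/matrixP => i j; rewrite -rowE !mxE ord1 /=.
  by case: j => [[|j] hj]; rewrite ?mulr1 ?mulr0.
exists (delta_mx 0 0 *m V^T).
  apply/eqP => w0; have : (delta_mx 0 0 : 'rV[R]_n.+1) *m V^T *m V = 0.
    by rewrite w0 mul0mx.
  by rewrite -mulmxA VV mulmx1 => /matrixP/(_ 0 0)/eqP; rewrite !mxE !eqxx oner_eq0.
rewrite eA !trmx_mul !trmxK !mulmxA -(mulmxA _ U^T U) UU mulmx1.
rewrite -(mulmxA _ V^T V) VV mulmx1 e0DT -!scalemxAl e0D -scalemxAl scalerA -expr2.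
by rewrite scalemxAl.
Qed.

Lemma top_singular_pair m n (A : 'M[R]_(1 + m, 1 + n)) : A != 0 ->
  exists (sig : R) (u : 'rV[R]_(1 + m)) (v : 'rV[R]_(1 + n)),
    [/\ 0 < sig, u *m u^T = 1%:M /\ v *m v^T = 1%:M,
        u *m A = sig *: v, A *m v^T = sig *: u^T &
        forall mu (w : 'rV[R]_(1 + n)),
          w != 0 -> w *m (A^T *m A) = mu *: w -> mu <= sig ^+ 2].
Proof.
move=> A_neq0; set S := A^T *m A.
have S_sym : S^T = S by rewrite /S trmx_mul trmxK.
have [l [v0 [v0_neq0 ev0 l_max trS]]] := sym_top_eigen S_sym.
have l_gt0 : 0 < l.
  have trS_gt0 : 0 < \tr S.
    rewrite /S mxtrace_mulC -frob_sq_trace lt_def frob_sq_ge0 andbT.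
    by apply: contra_neq A_neq0; exact: frob_sq_eq0.
  by move: (lt_le_trans trS_gt0 trS); rewrite pmulr_rgt0.
set nv := (v0 *m v0^T) 0 0.
have nv_gt0 : 0 < nv.
  have -> : nv = frob_sq v0 by rewrite frob_sq_trace /mxtrace big_ord1.
  rewrite lt_def frob_sq_ge0 andbT; apply: contra_neq v0_neq0; exact: frob_sq_eq0.
set v := (Num.sqrt nv)^-1 *: v0.
have vv : v *m v^T = 1%:M.
  rewrite /v linearZ /= -scalemxAl -scalemxAr scalerA [v0 *m v0^T]mx11_scalar -/nv.
  rewrite -scalemx1 scalerA -expr2 exprVn sqr_sqrtr ?ltW // mulVf ?scale1r //.
  by rewrite gt_eqF.
have ev : v *m S = l *: v by rewrite /v -scalemxAl ev0 !scalerA mulrC.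
set sig := Num.sqrt l.
have sig_gt0 : 0 < sig by rewrite sqrtr_gt0.
have sig2 : sig ^+ 2 = l by rewrite sqr_sqrtr ?ltW.
have sig_neq0 : sig != 0 by rewrite gt_eqF.
exists sig, (sig^-1 *: (v *m A^T)), v; split => //.
- split => //; rewrite linearZ /= -scalemxAl -scalemxAr scalerA trmx_mul trmxK.
  rewrite mulmxA -(mulmxA v) -/S ev -scalemxAl vv scalerA -expr2 exprVn sig2.
  by rewrite mulVf ?scale1r // gt_eqF.
- rewrite -scalemxAl -mulmxA -/S ev scalerA -sig2 expr2 mulrA mulVf //.
  by rewrite mul1r.
- by rewrite [in RHS]linearZ /= trmx_mul trmxK scalerA divff ?scale1r.
- by rewrite sig2.
Qed.

Lemma householder_deflation m n (A : 'M[R]_(1 + m, 1 + n)) (sig : R)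
    (u : 'rV[R]_(1 + m)) (v : 'rV[R]_(1 + n)) :
  u *m u^T = 1%:M -> v *m v^T = 1%:M ->
  u *m A = sig *: v -> A *m v^T = sig *: u^T ->
  exists (Hu : 'M[R]_(1 + m)) (Hv : 'M[R]_(1 + n)) (A' : 'M[R]_(m, n)),
    [/\ Hu^T *m Hu = 1%:M, Hv^T *m Hv = 1%:M &
        A = Hu *m block_mx (sig%:M : 'M_1) 0 0 A' *m Hv^T].
Proof.
move=> uu vv uA Av.
have [Hu [HuT HuHu eHu]] := householder uu.
have [Hv [HvT HvHv eHv]] := householder vv.
set B := Hu *m A *m Hv.
have top_row : usubmx B = sig *: basis_row0 R n.
  rewrite -basis_row0_mul /B !mulmxA eHu uA -scalemxAl -eHv -mulmxA HvHv mulmx1 //.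
have left_col : lsubmx B = sig *: (basis_row0 R m)^T.
  have Hv_e : Hv *m (basis_row0 R n)^T = v^T by rewrite -eHv trmx_mul HvT.
  have Hu_u : Hu *m u^T = (basis_row0 R m)^T.
    by rewrite -eHu trmx_mul HuT mulmxA HuHu mul1mx.
  by rewrite -mul_tr_basis_row0 /B -!mulmxA Hv_e Av -scalemxAr Hu_u.
exists Hu, Hv, (drsubmx B); split; rewrite ?HuT ?HvT //.
have -> : block_mx (sig%:M : 'M_1) 0 0 (drsubmx B) = B.
  rewrite -[RHS]submxK; congr block_mx.
  - by rewrite /ulsubmx top_row scale_row_mx row_mxKl scalemx1.
  - by rewrite /ursubmx top_row scale_row_mx row_mxKr scaler0.
  - have -> : dlsubmx B = dsubmx (lsubmx B) by apply/matrixP => i j; rewrite !mxE.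
    by rewrite left_col tr_row_mx trmx1 trmx0 scale_col_mx col_mxKd scaler0.
by rewrite /B !mulmxA HuHu mul1mx -mulmxA HvHv mulmx1.
Qed.

Section Deflated.
Variables (m n : nat) (A : 'M[R]_(1 + m, 1 + n)) (sig : R).
Variables (Hu : 'M[R]_(1 + m)) (Hv : 'M[R]_(1 + n)) (A' : 'M[R]_(m, n)).
Hypotheses (sig_ge0 : 0 <= sig) (HuHu : Hu^T *m Hu = 1%:M) (HvHv : Hv^T *m Hv = 1%:M)
           (eA : A = Hu *m block_mx (sig%:M : 'M_1) 0 0 A' *m Hv^T).

Lemma deflated_sing_le s' :
  (forall mu (w : 'rV[R]_(1 + n)),
     w != 0 -> w *m (A^T *m A) = mu *: w -> mu <= sig ^+ 2) ->
  is_singular_value_seq A' s' -> s' 0%N <= sig.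
Proof.
move=> top svd'; have [s'0_gt0|s'0_le0] := ltP 0 (s' 0%N); last exact: le_trans s'0_le0 sig_ge0.
have [w w_neq0 ew] := sing_val_top_eigen svd' s'0_gt0.
set z := row_mx (0 : 'rV[R]_1) w.
have z_neq0 : z != 0.
  apply: contraNneq w_neq0 => z0; rewrite -(row_mxKr (0 : 'rV[R]_1) w) -/z z0.
  by apply/eqP/matrixP => i j; rewrite !mxE.
have AA : A^T *m A = Hv *m block_mx ((sig ^+ 2)%:M : 'M_1) 0 0 (A'^T *m A') *m Hv^T.
  rewrite eA !trmx_mul trmxK !mulmxA -(mulmxA _ Hu^T Hu) HuHu mulmx1.
  rewrite tr_block_mx tr_scalar_mx !trmx0 -[Hv *m _ *m block_mx _ _ _ A']mulmxA.
  rewrite mulmx_block.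
  by rewrite !mul0mx !mulmx0 !addr0 !add0r mul_scalar_mx scale_scalar_mx expr2.
have /top le_s'sig : z *m Hv^T != 0.
  apply: contraNneq z_neq0 => zH0.
  by rewrite -(mulmx1 z) -HvHv mulmxA zH0 mul0mx.
rewrite -(ger0_norm sig_ge0) -sqrtr_sqr; apply: ler_sqrt_sqr; apply: le_s'sig.
rewrite AA !mulmxA -(mulmxA z Hv^T Hv) HvHv mulmx1 mul_row_block.
by rewrite !mul0mx !mulmx0 !addr0 add0r ew -[X in row_mx X _](scaler0 _ (s' 0%N ^+ 2))
  -scale_row_mx scalemxAl.
Qed.

Lemma svd_deflated s' :
  s' 0%N <= sig -> is_singular_value_seq A' s' ->
  is_singular_value_seq A (fun k => if k is j.+1 then s' j else sig).
Proof.
move=> s'_le [s'_ge0 s'_mono s'_min [U' [V' [UU' VV' eA']]]].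
split.
- by case.
- move=> [|k] [|l] //= le_kl; last exact: s'_mono.
  exact: le_trans (s'_mono _ _ _) s'_le.
- by move=> [|k] /=; rewrite minnSS // ltnS; exact: s'_min.
have orth_ext k (H : 'M[R]_(1 + k)) (W : 'M[R]_k) :
    H^T *m H = 1%:M -> W^T *m W = 1%:M ->
    (H *m block_mx 1%:M 0 0 W)^T *m (H *m block_mx 1%:M 0 0 W) = 1%:M.
  move=> HH WW; rewrite trmx_mul mulmxA -(mulmxA _ H^T H) HH mulmx1 tr_block_mx.
  rewrite trmx1 !trmx0 mulmx_block !mul0mx !mulmx0 !mul1mx !addr0 !add0r WW.
  by symmetry; exact: (@scalar_mx_block _ 1 k 1).
exists (Hu *m block_mx 1%:M 0 0 U'), (Hv *m block_mx 1%:M 0 0 V').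
split; rewrite ?orth_ext //.
rewrite rect_diag_block /= trmx_mul tr_block_mx trmx1 !trmx0 eA eA' -!mulmxA.
congr (Hu *m _); rewrite !mulmxA; congr (_ *m Hv^T).
by rewrite !mulmx_block !mul0mx !mulmx0 !mul1mx !mulmx1 !addr0 !add0r mul0mx.
Qed.

End Deflated.

Lemma svd_exists m n (A : 'M[R]_(m, n)) : exists s, is_singular_value_seq A s.
Proof.
elim: m n A => [|m IH] n A.
  by exists (fun=> 0); rewrite [A]flatmx0; exact: svd_zero.
case: n A => [|n] A.
  by exists (fun=> 0); rewrite [A]thinmx0; exact: svd_zero.
have [->|A_neq0] := eqVneq A 0; first by exists (fun=> 0); exact: svd_zero.
have [sig [u [v [sig_gt0 [uu vv] uA Av top]]]] := @top_singular_pair m n A A_neq0.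
have [Hu [Hv [A' [HuHu HvHv eA]]]] := householder_deflation uu vv uA Av.
have [s' svd'] := IH n A'.
have s'_le := deflated_sing_le (ltW sig_gt0) HuHu HvHv eA top svd'.
have svdA := svd_deflated (ltW sig_gt0) HuHu HvHv eA s'_le svd'.
by exists (fun k => if k is j.+1 then s' j else sig).
Qed.

Lemma sing_val_spec p m n (A : 'M[R]_(m, n)) :
  exists s, is_singular_value_seq A s /\ sing_val p A = s p.-1.
Proof.
have [s svdA] := svd_exists A.
apply: (@epsilon_spec R (inhabits 0)
  (fun x => exists s, is_singular_value_seq A s /\ x = s p.-1)).
by exists (s p.-1), s.
Qed.

End SVD.

Lemma top_singular_compression (R : realType) n m p (A : 'M[R]_(n, m)) :
  (0 < p)%N -> 0 < sing_val p A ->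
  exists (P : 'M[R]_(n, p)) (Q : 'M[R]_(m, p)),
    [/\ forall k (X : 'M[R]_(n, k)), frob_norm (P^T *m X) <= frob_norm X,
        forall k (X : 'M[R]_(k, m)), frob_norm (X *m Q) <= frob_norm X &
        lower_bounded (sing_val p A) (P^T *m A *m Q)].
Proof.
have [s [[s_ge0 s_mono s_min [U [V [UU VV eA]]]] ->]] := sing_val_spec p A.
move=> p_gt0 sp_gt0.
have p_le_min : (p <= minn n m)%N.
  rewrite leqNgt; apply/negP => lt_min; move: sp_gt0.
  by rewrite s_min ?ltxx // -ltnS prednK.
have /andP[le_pn le_pm] : (p <= n)%N && (p <= m)%N by rewrite -leq_min.
exists (U *m lead_cols R n p), (V *m lead_cols R m p); split.
- by move=> k X; exact: frob_lead_cols_mul.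
- by move=> k X; exact: frob_mul_lead_cols.
have -> : (U *m lead_cols R n p)^T *m A *m (V *m lead_cols R m p) =
          diag_mx (\row_(j < p) s j).
  rewrite eA !trmx_mul !mulmxA -(mulmxA _ U^T U) UU mulmx1.
  rewrite -(mulmxA _ V^T V) VV mulmx1; apply/matrixP => i j.
  rewrite (lead_cols_compress _ le_pn le_pm) !mxE /=.
  rewrite -[(i : nat) == j]/(i == j).
  by case: (eqVneq i j) => [->|/negbTE ij]; rewrite ?eqxx ?mulr1n // ij mulr0n.
apply: lower_bounded_diag => [|j]; first exact: s_ge0.
by rewrite mxE; apply: s_mono; rewrite -ltnS prednK.
Qed.

Theorem mainTheorem3 (R : realType) (n1 n2 m1 m2 p : nat)
    (Mhat Mstar : 'M[R]_(n1 + n2, m1 + m2)) (eps M : R) :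
  (0 < p)%N ->
  (\rank Mhat <= p)%N ->
  \rank Mstar = p ->
  0 < sing_val p (ulsubmx Mstar) ->
  frob_norm (ulsubmx Mhat - ulsubmx Mstar) <= eps ->
  frob_norm (ursubmx Mhat - ursubmx Mstar) <= eps ->
  frob_norm (dlsubmx Mhat - dlsubmx Mstar) <= eps ->
  frob_norm (ulsubmx Mstar) <= M ->
  frob_norm (ursubmx Mstar) <= M ->
  frob_norm (dlsubmx Mstar) <= M ->
  eps <= sing_val p (ulsubmx Mstar) / 2 ->
  frob_norm (drsubmx Mhat - drsubmx Mstar)
    <= 8 * eps * (M ^+ 2 / sing_val p (ulsubmx Mstar) ^+ 2).
Proof.
move=> p_gt0 rk_hat rk_star sig_gt0 d11 d12 d21 M11 M12 M21 eps_le.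
set sig := sing_val p (ulsubmx Mstar) in sig_gt0 eps_le *.
have [P [Q [P_contr Q_contr lbD]]] := top_singular_compression p_gt0 sig_gt0.
set D := P^T *m ulsubmx Mstar *m Q in lbD.
set K := P^T *m ulsubmx Mhat *m Q.
have compress X : frob_norm (P^T *m X *m Q) <= frob_norm X.
  exact: le_trans (Q_contr _ _) (P_contr _ _).
have dK : frob_norm (K - D) <= eps.
  by rewrite -mulmxBl -mulmxBr; exact: le_trans (compress _) d11.
have sig_le : sig <= M.
  exact: le_trans (lower_bounded_le_frob p_gt0 lbD) (le_trans (compress _) M11).
have unitD := lower_bounded_unit sig_gt0 lbD.
have unitK : K \in unitmx.
  by apply: lower_bounded_unit (lower_bounded_perturb lbD dK eps_le); rewrite divr_gt0.
rewrite (low_rank_schur rk_hat unitK) (low_rank_schur (eq_leq rk_star) unitD).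
apply: (schur_complement_perturbation sig_gt0 sig_le lbD dK eps_le).
- by rewrite -mulmxBl; exact: le_trans (Q_contr _ _) d21.
- exact: le_trans (Q_contr _ _) M21.
- by rewrite -mulmxBr; exact: le_trans (P_contr _ _) d12.
- exact: le_trans (P_contr _ _) M12.
Qed.
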